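(* Let $G$ be an unmixed chordal graph and let $x$ be a simplicial vertex of $G$. Then $G\setminus\{y\}$ is unmixed for every $y\in N_G(x)$.
   Context: A graph is chordal if every cycle of length at least four has a chord; a vertex is simplicial if its neighbors form a clique. $N_G(x)$ is the set of neighbors of $x$, and $G\setminus\{y\}$ is the induced subgraph on $V(G)\setminus\{y\}$. A graph is unmixed if all its maximal independent sets have the same cardinality. *)

From mathcomp Require Import all_boot.
Set Implicit Arguments. Unset Strict Implicit. Unset Printing Implicit Defensive.

(* A finite simple graph: vertex type T (finType), edge relation e,
   symmetric and irreflexive.  Graph notions are stated relative to a
   vertex set V : {set T}, meaning the induced subgraph G[V]. *)

Definition simple_graph (T : finType) (e : rel T) :=
  symmetric e /\ irreflexive e.

Definition independent (T : finType) (e : rel T) (V S : {set T}) :=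
  S \subset V /\ (forall u v, u \in S -> v \in S -> ~~ e u v).

Definition maximal_independent (T : finType) (e : rel T) (V S : {set T}) :=
  independent e V S /\
  (forall S' : {set T}, independent e V S' -> S \subset S' -> S' = S).

Definition unmixed (T : finType) (e : rel T) (V : {set T}) :=
  forall S1 S2 : {set T}, maximal_independent e V S1 ->
    maximal_independent e V S2 -> #|S1| = #|S2|.

(* The whole graph is chordal: every cycle of length at least four
   (given by a duplicate-free nonempty sequence of vertices c = x :: s whose
   consecutive vertices, cyclically, are adjacent) has a chord, i.e. an edge
   between two vertices of the cycle that are not consecutive on it
   (indices i < j with j <> i+1 and (i,j) <> (0, size c - 1)). *)
Definition chordal (T : finType) (e : rel T) :=
  forall (x : T) (s : seq T), let c := x :: s in
    4 <= size c -> uniq c -> cycle e c ->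
    exists i j, [/\ i < j, j < size c, j != i.+1,
                    ~~ ((i == 0) && (j == (size c).-1))
                  & e (nth x c i) (nth x c j)].

Definition simplicial (T : finType) (e : rel T) (x : T) :=
  forall u v, e x u -> e x v -> u != v -> e u v.

From mathcomp Require Import all_boot.
Set Implicit Arguments. Unset Strict Implicit. Unset Printing Implicit Defensive.

(* Every maximal independent set S of G \ y is already maximal in G: the only
   vertex that S could fail to dominate is y, but S contains x or a neighbour
   of x, and either one is adjacent to y because x is simplicial.  Hence the
   maximal independent sets of G \ y are among those of G, and unmixedness is
   inherited. *)

Definition dominating (T : finType) (e : rel T) (V S : {set T}) :=
  forall v, v \in V -> v \notin S -> exists2 u, u \in S & e v u.

Section MaximalIndependent.

Variables (T : finType) (e : rel T).
Hypothesis simple_e : simple_graph e.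

Lemma maximal_independentP (V S : {set T}) :
  maximal_independent e V S <-> independent e V S /\ dominating e V S.
Proof.
have [sym_e irr_e] := simple_e.
split=> [[[sSV indS] maxS] | [[sSV indS] domS]].
  split=> // v vV vS.
  case: (boolP [exists u in S, e v u]) => [/exists_inP [u uS evu] | noNbr].
    by exists u.
  have indvS : independent e V (v |: S).
    split; first by rewrite subUset sub1set vV.
    have nbr u : u \in S -> ~~ e v u.
      by move=> uS; apply/negP => evu; case/exists_inP: noNbr; exists u.
    move=> a b; rewrite !in_setU1 => /orP [/eqP-> | aS] /orP [/eqP-> | bS].
    - by rewrite irr_e.
    - exact: nbr.
    - by rewrite sym_e; exact: nbr.
    - exact: indS.
  by move: vS; rewrite -(maxS _ indvS (subsetUr _ _)) setU11.
split=> // S' [sS'V indS'] sSS'; apply/eqP; rewrite eqEsubset sSS' andbT.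
apply/subsetP => v vS'; apply/negPn/negP => vS.
have [u uS evu] := domS v (subsetP sS'V v vS') vS.
by move: (indS' v u vS' (subsetP sSS' u uS)); rewrite evu.
Qed.

Variables (V : {set T}) (x y : T).
Hypotheses (simp_x : simplicial e x) (exy : e x y) (xV : x \in V).

Lemma maximal_independent_delete_simplicial_nbr (S : {set T}) :
  maximal_independent e (V :\ y) S -> maximal_independent e V S.
Proof.
have [sym_e irr_e] := simple_e.
have x_neq_y : x != y by apply: contraTneq exy => ->; rewrite irr_e.
have xVy : x \in V :\ y by rewrite in_setD1 x_neq_y.
move=> /maximal_independentP [[sSVy indS] domS].
apply/maximal_independentP; split.
  by split=> //; apply: subset_trans sSVy (subsetDl _ _).
move=> v vV vS; case: (eqVneq v y) => [-> | v_neq_y]; last first.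
  by apply: domS => //; rewrite in_setD1 v_neq_y.
have [xS | xNS] := boolP (x \in S); first by exists x; rewrite // sym_e.
have [z zS exz] := domS x xVy xNS.
have z_neq_y : z != y by move: (subsetP sSVy z zS); rewrite in_setD1 => /andP [].
by exists z; rewrite // simp_x // eq_sym.
Qed.

Lemma unmixed_delete_simplicial_nbr : unmixed e V -> unmixed e (V :\ y).
Proof.
move=> unV S1 S2 mS1 mS2.
by apply: unV; apply: maximal_independent_delete_simplicial_nbr.
Qed.

End MaximalIndependent.

Theorem proposition3p4 (T : finType) (e : rel T) (x : T) :
  simple_graph e -> chordal e -> unmixed e [set: T] -> simplicial e x ->
  forall y : T, e x y -> unmixed e ([set: T] :\ y).
Proof.
move=> simple_e _ unG simp_x y exy.
exact: (unmixed_delete_simplicial_nbr simple_e simp_x exy (in_setT x)).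
Qed.
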